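(* Let $S$ be an atomic base, let $\Gamma = x_1:A_1,\dots,x_n:A_n$ be a context and let $t$ be a term with $tFV(t)\subseteq\{x_1,\dots,x_n\}$. If the term $t$ of $A$ from $\Gamma$ is I-valid (with respect to $S$), then there is a normal proof-term $s$ (with respect to $S$) such that $t\twoheadrightarrow s$ and $\Gamma\vdash s:A$ is derivable in $\mathbf{IL}_{\mathbf{at}}$.
   Context: System $\mathbf{IL}_{\mathbf{at}}$. Formulas: $A,B ::= X \mid A\to B \mid \forall X.A$, $X$ an atom. Terms: $t,s ::= x \mid c^A \mid \lambda x.t \mid ts \mid \Lambda X.t \mid tX$ ($x$ term-variable, $c^A$ a term-constant for each formula $A$, $X$ an atom). Terms/formulas up to $\alpha$-equivalence; capture-avoiding substitutions $t[x:=s]$, $t[X:=Y]$, $A[X:=B]$; $t[\vec{t_i}]$ is simultaneous substitution $t[x_1:=t_1,\dots,x_n:=t_n]$. $tFV(t)$: free term-variables; a term is closed if $tFV(t)=\emptyset$. A context is a finite set $x_1:A_1,\dots,x_n:A_n$ of distinct variables; $PFV(\Gamma)$ the propositional variables free in the $A_i$. Derivability of $\Gamma\vdash t:A$: $\Gamma,x:A\vdash x:A$; $\Gamma\vdash c^A:A$; $\to$-introduction ($\Gamma,x:A\vdash t:B$ gives $\Gamma\vdash\lambda x.t:A\to B$); $\to$-elimination ($\Gamma\vdash t:A\to B$, $\Gamma\vdash s:A$ give $\Gamma\vdash ts:B$); $\forall$-introduction ($\Gamma\vdash t:A$, $X\notin PFV(\Gamma)$ give $\Gamma\vdash \Lambda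 X.t:\forall X.A$); $\forall$-elimination ($\Gamma\vdash t:\forall X.A$ gives $\Gamma\vdash tY:A[X:=Y]$ for any atom $Y$). $\beta$-reduction: $(\lambda x.t)s\to_\beta t[x:=s]$, $(\Lambda X.t)Y\to_\beta t[X:=Y]$, closed under all term contexts. Normal = containing no such redex. $\twoheadrightarrow$ = reflexive-transitive closure of $\to_\beta$. An atomic base $S$ is a set of term-constants $c^X$ for atoms $X$; a proof-term is a term containing no term-constant other than those $c^X\in S$. qI-validity: (1) a closed term $t$ of an atom $X$ is qI-valid iff $t\twoheadrightarrow s$ for some normal $s$ with $\vdash s:X$ derivable; (2) a closed term $t$ of $B\to C$ is qI-valid iff $t\twoheadrightarrow\lambda x.u$ for some $u$ such that $u[x:=s]$ of $C$ is qI-valid for every qI-valid closed term $s$ of $B$; (3) a closed term $t$ of $\forall X.A$ is qI-valid iff $t\twoheadrightarrow\Lambda X.u$ for some $u$ such that $u[X:=Y]$ of $A[X:=Y]$ is qI-valid for every atom $Y$; (4) a term $t$ of $A$ from $x_1:A_1,\dots,x_n:A_n$ with $tFV(t)\subseteq\{x_1,\dots,x_n\}$ is qI-valid iff $t[\vec{t_i}]$ of $A$ is qI-valid for all qI-valid closed terms $t_i$ of $A_i$. A term is I-valid iff it is a proof-term and qI-valid. *)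

From Stdlib Require Import List Arith.
Import ListNotations.

(* Atoms are natural numbers (de Bruijn indices for propositional
   variables; indices not captured by a binder are the free atoms). *)
Inductive form : Type :=
| FVar : nat -> form
| Imp : form -> form -> form
| All : form -> form.

(* Terms: term variables are de Bruijn indices; Cst A is the constant c^A;
   TApp t Y is the application of t to the atom Y. *)
Inductive term : Type :=
| Var : nat -> term
| Cst : form -> term
| Lam : term -> term
| App : term -> term -> term
| TLam : term -> term
| TApp : term -> nat -> term.

(* --- atom renaming (all atom substitutions A[X:=Y] are renamings) --- *)
Definition upr (f : nat -> nat) : nat -> nat :=
  fun n => match n with 0 => 0 | S m => S (f m) end.

Definition scons {T} (x : T) (f : nat -> T) : nat -> T :=
  fun n => match n with 0 => x | S m => f m end.

Fixpoint fren (f : nat -> nat) (A : form) : form :=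
  match A with
  | FVar n => FVar (f n)
  | Imp A B => Imp (fren f A) (fren f B)
  | All A => All (fren (upr f) A)
  end.

(* A[X:=Y] where X is the variable bound by the outer binder *)
Definition finst (Y : nat) (A : form) : form := fren (scons Y (fun n => n)) A.

Fixpoint tren (f : nat -> nat) (t : term) : term :=
  match t with
  | Var n => Var n
  | Cst A => Cst (fren f A)
  | Lam t => Lam (tren f t)
  | App t s => App (tren f t) (tren f s)
  | TLam t => TLam (tren (upr f) t)
  | TApp t Y => TApp (tren f t) (f Y)
  end.

(* t[X:=Y] for the variable bound by an outer Lambda *)
Definition tinst (Y : nat) (t : term) : term := tren (scons Y (fun n => n)) t.

Fixpoint vren (g : nat -> nat) (t : term) : term :=
  match t with
  | Var n => Var (g n)
  | Cst A => Cst A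
  | Lam t => Lam (vren (upr g) t)
  | App t s => App (vren g t) (vren g s)
  | TLam t => TLam (vren g t)
  | TApp t Y => TApp (vren g t) Y
  end.

Definition upt (sigma : nat -> term) : nat -> term :=
  fun n => match n with 0 => Var 0 | S m => vren S (sigma m) end.

Fixpoint subst (sigma : nat -> term) (t : term) : term :=
  match t with
  | Var n => sigma n
  | Cst A => Cst A
  | Lam t => Lam (subst (upt sigma) t)
  | App t s => App (subst sigma t) (subst sigma s)
  | TLam t => TLam (subst (fun n => tren S (sigma n)) t)
  | TApp t Y => TApp (subst sigma t) Y
  end.

(* t[x:=s] for the variable bound by an outer lambda *)
Definition subst1 (s : term) (t : term) : term := subst (scons s Var) t.

Fixpoint vars_below (k : nat) (t : term) : Prop :=
  match t with
  | Var n => n < k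
  | Cst _ => True
  | Lam t => vars_below (S k) t
  | App t s => vars_below k t /\ vars_below k s
  | TLam t => vars_below k t
  | TApp t _ => vars_below k t
  end.

Definition closed (t : term) : Prop := vars_below 0 t.

(* --- derivability of Gamma |- t : A ; Gamma = x_0:A_0, x_1:A_1, ... is a
   list, Var i referring to the i-th entry --- *)
Inductive typed : list form -> term -> form -> Prop :=
| ty_var : forall G n A, nth_error G n = Some A -> typed G (Var n) A
| ty_cst : forall G A, typed G (Cst A) A
| ty_lam : forall G t A B, typed (A :: G) t B -> typed G (Lam t) (Imp A B)
| ty_app : forall G t s A B,
    typed G t (Imp A B) -> typed G s A -> typed G (App t s) B
| ty_tlam : forall G t A,
    typed (map (fren S) G) t A -> typed G (TLam t) (All A)
| ty_tapp : forall G t A Y,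
    typed G t (All A) -> typed G (TApp t Y) (finst Y A).

Inductive step : term -> term -> Prop :=
| st_beta : forall t s, step (App (Lam t) s) (subst1 s t)
| st_tbeta : forall t Y, step (TApp (TLam t) Y) (tinst Y t)
| st_lam : forall t t', step t t' -> step (Lam t) (Lam t')
| st_appl : forall t t' s, step t t' -> step (App t s) (App t' s)
| st_appr : forall t s s', step s s' -> step (App t s) (App t s')
| st_tlam : forall t t', step t t' -> step (TLam t) (TLam t')
| st_tapp : forall t t' Y, step t t' -> step (TApp t Y) (TApp t' Y).

Inductive red : term -> term -> Prop :=
| red_refl : forall t, red t t
| red_step : forall t u v, step t u -> red u v -> red t v.

Fixpoint normal (t : term) : Prop :=
  match t with
  | Var _ => True
  | Cst _ => True
  | Lam t => normal t
  | App t s =>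
      (match t with Lam _ => False | _ => True end) /\ normal t /\ normal s
  | TLam t => normal t
  | TApp t _ => (match t with TLam _ => False | _ => True end) /\ normal t
  end.

(* --- atomic bases and proof-terms ---
   An atomic base is given by the set of atoms X such that c^X is in S.
   proof_term_at base k t : under k atom binders, every constant of t is
   c^X with X a free atom whose constant belongs to the base. *)
Fixpoint proof_term_at (base : nat -> Prop) (k : nat) (t : term) : Prop :=
  match t with
  | Var _ => True
  | Cst (FVar i) => k <= i /\ base (i - k)
  | Cst _ => False
  | Lam t => proof_term_at base k t
  | App t s => proof_term_at base k t /\ proof_term_at base k s
  | TLam t => proof_term_at base (S k) t
  | TApp t _ => proof_term_at base k t
  end.

Definition proof_term (base : nat -> Prop) (t : term) : Prop :=
  proof_term_at base 0 t.

(* --- qI-validity ---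
   qIv A rho t  means  "the closed term t of (fren rho A) is qI-valid";
   the renaming parameter makes the clause for forall structurally recursive:
   (fren rho (All A))[X:=Y] = fren (scons Y rho) A. *)
Fixpoint qIv (A : form) (rho : nat -> nat) (t : term) : Prop :=
  match A with
  | FVar n => exists s, red t s /\ normal s /\ typed [] s (FVar (rho n))
  | Imp B C => exists u, red t (Lam u) /\
      forall s, closed s -> qIv B rho s -> qIv C rho (subst1 s u)
  | All B => exists u, red t (TLam u) /\
      forall Y : nat, qIv B (scons Y rho) (tinst Y u)
  end.

Definition qIvalid (A : form) (t : term) : Prop := qIv A (fun n => n) t.

Definition qIvalid_ctx (G : list form) (t : term) (A : form) : Prop :=
  forall ts : list term,
    Forall2 (fun ti Ai => closed ti /\ qIvalid Ai ti) ts G ->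
    qIvalid A (subst (fun n => nth n ts (Var n)) t).

Definition Ivalid (base : nat -> Prop) (G : list form) (t : term) (A : form)
  : Prop := proof_term base t /\ qIvalid_ctx G t A.

(* Reification and reflection, by induction on formulas: a closed qI-valid term
   of E reduces to a normal term of type E, and the eta-expansion of a closed
   normal term of type E that is not an abstraction is qI-valid.  At B -> C a
   valid term reduces to [Lam u]; instantiating [u] with the eta-expanded
   constant c^B, valid by reflection, gives a term that normalizes by
   reification at C.  The constant acts as a generic argument: each step of the
   instance is matched by at most one step of [u] (none for a beta step between
   an eta-expansion of c^B and one of its arguments), so [u] reduces to a term
   related to that normal form, which is then normal and of type C under the
   hypothesis x : B.  At forall X. B the bound atom is instantiated with a
   fresh atom that is renamed back afterwards.  A term valid in a context is
   treated as its closed lambda-abstraction, and reduction preserves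
   proof-terms. *)

From Stdlib Require Import List Arith Lia.
Import ListNotations.

(** * Renaming and substitution *)

Lemma fren_ext : forall A f g, (forall n, f n = g n) -> fren f A = fren g A.
Proof.
  induction A; intros f g H; simpl; f_equal; auto.
  apply IHA. intros [|n]; simpl; auto.
Qed.

Lemma fren_comp : forall A f g, fren f (fren g A) = fren (fun n => f (g n)) A.
Proof.
  induction A; intros f g; simpl; f_equal; auto.
  rewrite IHA. apply fren_ext. intros [|n]; reflexivity.
Qed.

Lemma fren_id : forall A, fren (fun n => n) A = A.
Proof.
  induction A; simpl; f_equal; auto.
  rewrite <- IHA at 2. apply fren_ext. intros [|n]; reflexivity.
Qed.

Lemma fren_finst : forall f Y A, fren f (finst Y A) = finst (f Y) (fren (upr f) A).
Proof.
  intros. unfold finst. rewrite !fren_comp. apply fren_ext. intros [|n]; reflexivity.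
Qed.

Lemma tren_ext : forall t f g, (forall n, f n = g n) -> tren f t = tren g t.
Proof.
  induction t as [n|C|t IHt|t1 IHt1 t2 IHt2|t IHt|t IHt Y]; intros f g H; simpl; f_equal; auto using fren_ext.
  apply IHt. intros [|n]; simpl; auto.
Qed.

Lemma tren_comp : forall t f g, tren f (tren g t) = tren (fun n => f (g n)) t.
Proof.
  induction t as [n|C|t IHt|t1 IHt1 t2 IHt2|t IHt|t IHt Y]; intros f g; simpl; f_equal; auto using fren_comp.
  rewrite IHt. apply tren_ext. intros [|n]; reflexivity.
Qed.

Lemma tren_id : forall t, tren (fun n => n) t = t.
Proof.
  induction t as [n|C|t IHt|t1 IHt1 t2 IHt2|t IHt|t IHt Y]; simpl; f_equal; auto using fren_id.
  rewrite <- IHt at 2. apply tren_ext. intros [|n]; reflexivity.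
Qed.

Lemma vren_ext : forall t f g, (forall n, f n = g n) -> vren f t = vren g t.
Proof.
  induction t as [n|C|t IHt|t1 IHt1 t2 IHt2|t IHt|t IHt Y]; intros f g H; simpl; f_equal; auto.
  apply IHt. intros [|n]; simpl; auto.
Qed.

Lemma vren_comp : forall t f g, vren f (vren g t) = vren (fun n => f (g n)) t.
Proof.
  induction t as [n|C|t IHt|t1 IHt1 t2 IHt2|t IHt|t IHt Y]; intros f g; simpl; f_equal; auto.
  rewrite IHt. apply vren_ext. intros [|n]; reflexivity.
Qed.

Lemma vren_tren : forall t g f, vren g (tren f t) = tren f (vren g t).
Proof. induction t as [n|C|t IHt|t1 IHt1 t2 IHt2|t IHt|t IHt Y]; intros g f; simpl; f_equal; auto. Qed.

Lemma subst_ext : forall t s1 s2, (forall n, s1 n = s2 n) -> subst s1 t = subst s2 t.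
Proof.
  induction t as [n|C|t IHt|t1 IHt1 t2 IHt2|t IHt|t IHt Y]; intros s1 s2 H; simpl; f_equal; auto.
  - apply IHt. intros [|n]; simpl; f_equal; auto.
  - apply IHt. intros n; simpl; f_equal; auto.
Qed.

Lemma subst_vren : forall t s g, subst s (vren g t) = subst (fun n => s (g n)) t.
Proof.
  induction t as [n|C|t IHt|t1 IHt1 t2 IHt2|t IHt|t IHt Y]; intros s g; simpl; f_equal; auto.
  all: rewrite IHt; apply subst_ext; intros [|n]; reflexivity.
Qed.

Lemma vren_subst : forall t s g, vren g (subst s t) = subst (fun n => vren g (s n)) t.
Proof.
  induction t as [n|C|t IHt|t1 IHt1 t2 IHt2|t IHt|t IHt Y]; intros s g; simpl; f_equal; auto.
  - rewrite IHt. apply subst_ext. intros [|n]; simpl; auto.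
    unfold upt. rewrite !vren_comp. reflexivity.
  - rewrite IHt. apply subst_ext. intros n. apply vren_tren.
Qed.

Lemma tren_subst : forall t s f,
  tren f (subst s t) = subst (fun n => tren f (s n)) (tren f t).
Proof.
  induction t as [n|C|t IHt|t1 IHt1 t2 IHt2|t IHt|t IHt Y]; intros s f; simpl; f_equal; auto.
  - rewrite IHt. apply subst_ext. intros [|n]; simpl; auto. symmetry; apply vren_tren.
  - rewrite IHt. apply subst_ext. intros n. rewrite !tren_comp. reflexivity.
Qed.

Lemma subst_var : forall t, subst Var t = t.
Proof.
  induction t as [n|C|t IHt|t1 IHt1 t2 IHt2|t IHt|t IHt Y]; simpl; f_equal; auto.
  rewrite <- IHt at 2. apply subst_ext. intros [|n]; reflexivity.
Qed.

Lemma subst_subst : forall t s1 s2,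
  subst s2 (subst s1 t) = subst (fun n => subst s2 (s1 n)) t.
Proof.
  induction t as [n|C|t IHt|t1 IHt1 t2 IHt2|t IHt|t IHt Y]; intros s1 s2; simpl; f_equal; auto.
  - rewrite IHt. apply subst_ext. intros [|n]; simpl; auto.
    rewrite subst_vren, vren_subst. reflexivity.
  - rewrite IHt. apply subst_ext. intros n. symmetry; apply tren_subst.
Qed.

Lemma subst_scons_vren_S : forall s t, subst (scons s Var) (vren S t) = t.
Proof. intros. rewrite subst_vren. apply subst_var. Qed.

Lemma vren_subst1 : forall g s t, vren g (subst1 s t) = subst1 (vren g s) (vren (upr g) t).
Proof.
  intros. unfold subst1. rewrite vren_subst, subst_vren.
  apply subst_ext. intros [|n]; reflexivity.
Qed.

Lemma tren_subst1 : forall f s t, tren f (subst1 s t) = subst1 (tren f s) (tren f t).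
Proof.
  intros. unfold subst1. rewrite tren_subst. apply subst_ext. intros [|n]; reflexivity.
Qed.

Lemma tren_tinst : forall f Y t, tren f (tinst Y t) = tinst (f Y) (tren (upr f) t).
Proof.
  intros. unfold tinst. rewrite !tren_comp. apply tren_ext. intros [|n]; reflexivity.
Qed.

Lemma subst_ext_vars_below : forall t k s1 s2, vars_below k t ->
  (forall n, n < k -> s1 n = s2 n) -> subst s1 t = subst s2 t.
Proof.
  induction t as [n|C|t IHt|t1 IHt1 t2 IHt2|t IHt|t IHt Y]; intros k s1 s2 H Hs; simpl in *; f_equal.
  - auto.
  - apply (IHt (S k)); auto. intros [|n] Hn; simpl; auto. f_equal. apply Hs. lia.
  - apply (IHt1 k); tauto.
  - apply (IHt2 k); tauto.
  - apply (IHt k); auto. intros n Hn. f_equal. auto.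
  - eauto.
Qed.

Lemma step_vren : forall t t', step t t' -> forall g, step (vren g t) (vren g t').
Proof.
  induction 1; intros g; simpl; try (constructor; auto; fail).
  - rewrite vren_subst1. constructor.
  - unfold tinst. rewrite vren_tren. constructor.
Qed.

Lemma step_tren : forall t t', step t t' -> forall f, step (tren f t) (tren f t').
Proof.
  induction 1; intros f; simpl; try (constructor; auto; fail).
  - rewrite tren_subst1. constructor.
  - rewrite tren_tinst. constructor.
Qed.

Lemma step_vren_inv : forall t g w, step (vren g t) w -> exists u, w = vren g u /\ step t u.
Proof.
  induction t as [n|C|t IH|t1 IH1 t2 IH2|t IH|t IH Y]; intros g w H; simpl in H;
    inversion H as [a b Ea|a Y' Ea|a a' Ha|a a' b Ha|a b b' Ha|a a' Ha|a a' Y' Ha]; subst.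
  - destruct (IH _ _ Ha) as [u [-> Hu]]. exists (Lam u); split; [reflexivity | constructor; auto].
  - destruct t1; try discriminate. injection Ea as ->.
    exists (subst1 t2 t1). split; [symmetry; apply vren_subst1 | constructor].
  - destruct (IH1 _ _ Ha) as [u [-> Hu]]. exists (App u t2); split; [reflexivity | constructor; auto].
  - destruct (IH2 _ _ Ha) as [u [-> Hu]]. exists (App t1 u); split; [reflexivity | constructor; auto].
  - destruct (IH _ _ Ha) as [u [-> Hu]]. exists (TLam u); split; [reflexivity | constructor; auto].
  - destruct t; try discriminate. injection Ea as ->.
    exists (tinst Y t). split; [symmetry; apply vren_tren | constructor].
  - destruct (IH _ _ Ha) as [u [-> Hu]]. exists (TApp u Y); split; [reflexivity | constructor; auto].
Qed.

Lemma step_tren_inv : forall t f w, step (tren f t) w -> exists u, w = tren f u /\ step t u.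
Proof.
  induction t as [n|C|t IH|t1 IH1 t2 IH2|t IH|t IH Y]; intros f w H; simpl in H;
    inversion H as [a b Ea|a Y' Ea|a a' Ha|a a' b Ha|a b b' Ha|a a' Ha|a a' Y' Ha]; subst.
  - destruct (IH _ _ Ha) as [u [-> Hu]]. exists (Lam u); split; [reflexivity | constructor; auto].
  - destruct t1; try discriminate. injection Ea as ->.
    exists (subst1 t2 t1). split; [symmetry; apply tren_subst1 | constructor].
  - destruct (IH1 _ _ Ha) as [u [-> Hu]]. exists (App u t2); split; [reflexivity | constructor; auto].
  - destruct (IH2 _ _ Ha) as [u [-> Hu]]. exists (App t1 u); split; [reflexivity | constructor; auto].
  - destruct (IH _ _ Ha) as [u [-> Hu]]. exists (TLam u); split; [reflexivity | constructor; auto].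
  - destruct t; try discriminate. injection Ea as ->.
    exists (tinst Y t). split; [symmetry; apply tren_tinst | constructor].
  - destruct (IH _ _ Ha) as [u [-> Hu]]. exists (TApp u Y); split; [reflexivity | constructor; auto].
Qed.

Lemma red_trans : forall a b c, red a b -> red b c -> red a c.
Proof. induction 1; intros; auto. econstructor; eauto. Qed.

Lemma red_one : forall a b, step a b -> red a b.
Proof. intros. econstructor; eauto. constructor. Qed.

Lemma red_cong : forall F : term -> term, (forall a b, step a b -> step (F a) (F b)) ->
  forall a b, red a b -> red (F a) (F b).
Proof. intros F HF; induction 1; [constructor | econstructor; eauto]. Qed.

Lemma red_lam : forall a b, red a b -> red (Lam a) (Lam b).
Proof. apply red_cong. intros; constructor; auto. Qed.

Lemma red_tlam : forall a b, red a b -> red (TLam a) (TLam b).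
Proof. apply red_cong. intros; constructor; auto. Qed.

Lemma red_appl : forall s a b, red a b -> red (App a s) (App b s).
Proof. intros s; apply (red_cong (fun x => App x s)). intros; constructor; auto. Qed.

Lemma red_appr : forall s a b, red a b -> red (App s a) (App s b).
Proof. intros s; apply (red_cong (App s)). intros; constructor; auto. Qed.

Lemma red_tapp : forall Y a b, red a b -> red (TApp a Y) (TApp b Y).
Proof. intros Y; apply (red_cong (fun x => TApp x Y)). intros; constructor; auto. Qed.

Lemma red_vren : forall g a b, red a b -> red (vren g a) (vren g b).
Proof. intros g; apply red_cong. intros; apply step_vren; auto. Qed.

Lemma red_tren : forall f a b, red a b -> red (tren f a) (tren f b).
Proof. intros f; apply red_cong. intros; apply step_tren; auto. Qed.

Lemma red_lam_inv : forall a s, red (Lam a) s -> exists b, s = Lam b /\ red a b.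
Proof.
  intros a s H. remember (Lam a) as x eqn:Hx. revert a Hx.
  induction H; intros a ->.
  - exists a; split; [reflexivity | constructor].
  - inversion H; subst. destruct (IHred t' eq_refl) as [b [-> Hb]].
    exists b; split; [reflexivity | econstructor; eauto].
Qed.

Lemma normal_vren : forall t g, normal (vren g t) <-> normal t.
Proof.
  induction t as [n|C|t IH|t1 IH1 t2 IH2|t IH|t IH Y]; intros g; simpl; try tauto; try apply IH.
  - rewrite IH1, IH2. destruct t1; simpl; tauto.
  - rewrite IH. destruct t; simpl; tauto.
Qed.

Lemma normal_tren : forall t f, normal (tren f t) <-> normal t.
Proof.
  induction t as [n|C|t IH|t1 IH1 t2 IH2|t IH|t IH Y]; intros f; simpl; try tauto; try apply IH.
  - rewrite IH1, IH2. destruct t1; simpl; tauto.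
  - rewrite IH. destruct t; simpl; tauto.
Qed.

Lemma vars_below_vren : forall t k k' g, vars_below k t ->
  (forall n, n < k -> g n < k') -> vars_below k' (vren g t).
Proof.
  induction t as [n|C|t IH|t1 IH1 t2 IH2|t IH|t IH Y]; intros k k' g H Hg; simpl in *; auto.
  - apply (IH (S k)); auto. intros [|n] Hn; simpl; [lia|]. specialize (Hg n). lia.
  - destruct H; split; eauto.
  - eauto.
  - eauto.
Qed.

Lemma vars_below_tren : forall t k f, vars_below k (tren f t) <-> vars_below k t.
Proof.
  induction t as [n|C|t IH|t1 IH1 t2 IH2|t IH|t IH Y]; intros k f; simpl in *;
    try tauto; try apply IH.
  rewrite IH1, IH2; tauto.
Qed.

Lemma vars_below_subst : forall t k k' s, vars_below k t ->
  (forall n, n < k -> vars_below k' (s n)) -> vars_below k' (subst s t).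
Proof.
  induction t as [n|C|t IH|t1 IH1 t2 IH2|t IH|t IH Y]; intros k k' s H Hs; simpl in *; auto.
  - apply (IH (S k)); auto. intros [|n] Hn; simpl; [lia|].
    apply vars_below_vren with k'; [apply Hs; lia | intros; lia].
  - destruct H; split; eauto.
  - apply (IH k); auto. intros n Hn. apply vars_below_tren. auto.
  - eauto.
Qed.

Lemma step_vars_below : forall t t', step t t' -> forall k, vars_below k t -> vars_below k t'.
Proof.
  induction 1; intros k Hk; simpl in *; try tauto; auto.
  - destruct Hk as [H1 H2]. apply (vars_below_subst _ (S k)); auto.
    intros [|n] Hn; simpl; auto. lia.
  - apply vars_below_tren. auto.
  - destruct Hk; split; eauto.
  - destruct Hk; split; eauto.
Qed.

Lemma red_vars_below : forall t t', red t t' -> forall k, vars_below k t -> vars_below k t'.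
Proof. induction 1; intros; eauto using step_vars_below. Qed.

Lemma proof_term_at_vren : forall base t k g,
  proof_term_at base k t -> proof_term_at base k (vren g t).
Proof.
  induction t as [n|C|t IH|t1 IH1 t2 IH2|t IH|t IH Y]; intros k g H; simpl in *; auto.
  destruct H; split; eauto.
Qed.

Lemma proof_term_at_tren : forall base t k k' f, proof_term_at base k t ->
  (forall i, k <= i -> k' <= f i /\ f i - k' = i - k) -> proof_term_at base k' (tren f t).
Proof.
  induction t as [n|C|t IH|t1 IH1 t2 IH2|t IH|t IH Y]; intros k k' f H Hf; simpl in *; auto.
  - destruct C as [i| |]; simpl in *; try tauto. destruct H as [H1 H2].
    destruct (Hf i H1) as [H3 H4]. split; auto. rewrite H4; auto.
  - eauto.
  - destruct H; split; eauto.
  - apply (IH (S k)); auto. intros [|i] Hi; [lia|]. simpl.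
    destruct (Hf i) as [H1 H2]; lia.
  - eauto.
Qed.

Lemma proof_term_at_subst : forall base t k s, proof_term_at base k t ->
  (forall n, proof_term_at base k (s n)) -> proof_term_at base k (subst s t).
Proof.
  induction t as [n|C|t IH|t1 IH1 t2 IH2|t IH|t IH Y]; intros k s H Hs; simpl in *; auto.
  - apply IH; auto. intros [|n]; simpl; auto. apply proof_term_at_vren; auto.
  - destruct H; split; eauto.
  - apply IH; auto. intros n. apply (proof_term_at_tren _ _ k); auto. intros; lia.
Qed.

Lemma step_proof_term_at : forall base t t', step t t' ->
  forall k, proof_term_at base k t -> proof_term_at base k t'.
Proof.
  induction 1; intros k Hk; simpl in *; try tauto; auto.
  - destruct Hk as [H1 H2]. apply proof_term_at_subst; auto. intros [|n]; simpl; auto.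
  - apply (proof_term_at_tren _ _ (S k)); auto. intros [|i] Hi; [lia|]. simpl. lia.
  - destruct Hk; split; eauto.
  - destruct Hk; split; eauto.
Qed.

Lemma red_proof_term_at : forall base t t', red t t' ->
  forall k, proof_term_at base k t -> proof_term_at base k t'.
Proof. induction 1; intros; eauto using step_proof_term_at. Qed.

Lemma typed_tren : forall G t A, typed G t A ->
  forall f, typed (map (fren f) G) (tren f t) (fren f A).
Proof.
  induction 1; intros f; simpl.
  - constructor. apply map_nth_error. auto.
  - constructor.
  - constructor. apply (IHtyped f).
  - econstructor; [apply (IHtyped1 f) | apply IHtyped2].
  - constructor.
    replace (map (fren S) (map (fren f) G)) with (map (fren (upr f)) (map (fren S) G)).
    + apply IHtyped.
    + rewrite !map_map. apply map_ext. intros a. rewrite !fren_comp. reflexivity.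
  - rewrite fren_finst. constructor. apply (IHtyped f).
Qed.

Lemma typed_vren_inv : forall t G' g T, typed G' (vren g t) T ->
  forall G, (forall i, nth_error G' (g i) = nth_error G i) -> typed G t T.
Proof.
  induction t as [n|C|t IH|t1 IH1 t2 IH2|t IH|t IH Y]; intros G' g T H G HG; simpl in H;
    inversion H; subst.
  - constructor. rewrite <- HG. auto.
  - constructor.
  - constructor. eapply IH; eauto. intros [|i]; simpl; auto.
  - econstructor; eauto.
  - constructor. eapply IH; eauto. intros i. rewrite !nth_error_map, HG. reflexivity.
  - constructor. eapply IH; eauto.
Qed.

Inductive spine : term -> Prop :=
| spine_var n : spine (Var n)
| spine_app p a : spine p -> spine (App p a)
| spine_tapp p Y : spine p -> spine (TApp p Y).

Lemma spine_typed_unique : forall p, spine p ->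
  forall G T1 T2, typed G p T1 -> typed G p T2 -> T1 = T2.
Proof.
  induction 1 as [n|p a _ IH|p Y _ IH]; intros G T1 T2 H1 H2.
  - inversion H1; inversion H2; congruence.
  - inversion H1 as [| | |? ? ? A1 ? Hp1 _| |]; inversion H2 as [| | |? ? ? A2 ? Hp2 _| |].
    specialize (IH _ _ _ Hp1 Hp2). congruence.
  - inversion H1 as [| | | | |? ? B1 ? Hp1]; inversion H2 as [| | | | |? ? B2 ? Hp2].
    specialize (IH _ _ _ Hp1 Hp2). congruence.
Qed.

Lemma spine_vren_inv : forall p g, spine (vren g p) -> spine p.
Proof. induction p; intros g H; simpl in H; inversion H; subst; constructor; eauto. Qed.

Lemma spine_tren : forall p f, spine p -> spine (tren f p).
Proof. induction 1; simpl; constructor; auto. Qed.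

Lemma spine_tren_inv : forall p f, spine (tren f p) -> spine p.
Proof.
  induction p as [n|C|t IH|t1 IH1 t2 IH2|t IH|t IH Y]; intros f H; simpl in H;
    inversion H; subst; constructor; eauto.
Qed.

Lemma spine_step : forall p p', step p p' -> spine p -> spine p'.
Proof.
  induction 1; intros Hp; inversion Hp; subst; try constructor; auto.
  all: match goal with Hx : spine (_ _) |- _ => inversion Hx end.
Qed.

Lemma typed_app_shift_inv : forall G A p T,
  typed (A :: G) (App (vren S p) (Var 0)) T -> typed G p (Imp A T).
Proof.
  intros G A p T H. inversion H; subst.
  match goal with Hx : typed _ (Var 0) _ |- _ => inversion Hx; subst end.
  match goal with Hx : nth_error _ 0 = _ |- _ => simpl in Hx; injection Hx as -> end.
  eapply typed_vren_inv; [eassumption|]. reflexivity.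
Qed.

(* [p] gets a type by renaming back along [pred]; as a spine has at most one
   type, shifting that type recovers the one found for [tren S p]. *)
Lemma typed_tapp_shift_inv : forall G p T, spine p ->
  typed (map (fren S) G) (TApp (tren S p) 0) T -> typed G p (All T).
Proof.
  intros G p T Hsp H. inversion H as [| | | | |? ? T' ? Hp]; subst.
  assert (Hpred : typed G p (fren pred (All T'))).
  { replace G with (map (fren pred) (map (fren S) G)).
    - replace p with (tren pred (tren S p)) by
        (rewrite tren_comp; apply tren_id).
      apply typed_tren. exact Hp.
    - rewrite map_map. rewrite <- (map_id G) at 2. apply map_ext. intros a.
      rewrite fren_comp. apply fren_id. }
  assert (E : All T' = fren S (fren pred (All T'))).
  { apply (spine_typed_unique (tren S p) (spine_tren _ _ Hsp) _ _ _ Hp).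
    apply typed_tren. exact Hpred. }
  simpl in Hpred, E. injection E as E.
  replace (finst 0 T') with (fren (upr pred) T'); auto.
  rewrite E at 2. unfold finst. rewrite !fren_comp. apply fren_ext. intros [|n]; reflexivity.
Qed.

(** * Eta-expansion *)

Fixpoint eta (E : form) (n : term) : term :=
  match E with
  | FVar _ => n
  | Imp _ E' => Lam (eta E' (App (vren S n) (Var 0)))
  | All E' => TLam (eta E' (TApp (tren S n) 0))
  end.

Lemma vren_eta : forall E n g, vren g (eta E n) = eta E (vren g n).
Proof.
  induction E as [x|E1 IHE1 E2 IHE2|E IHE]; intros n g; simpl; auto.
  - rewrite IHE2. simpl. rewrite !vren_comp. reflexivity.
  - rewrite IHE. simpl. rewrite vren_tren. reflexivity.
Qed.

Lemma tren_eta : forall E n f, tren f (eta E n) = eta E (tren f n).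
Proof.
  induction E as [x|E1 IHE1 E2 IHE2|E IHE]; intros n f; simpl; auto.
  - rewrite IHE2. simpl. rewrite vren_tren. reflexivity.
  - rewrite IHE. simpl. rewrite !tren_comp. reflexivity.
Qed.

Lemma subst_eta : forall E n s, subst s (eta E n) = eta E (subst s n).
Proof.
  induction E as [x|E1 IHE1 E2 IHE2|E IHE]; intros n s; simpl; auto.
  - rewrite IHE2. simpl. rewrite subst_vren, vren_subst. reflexivity.
  - rewrite IHE. simpl. rewrite tren_subst. reflexivity.
Qed.

Lemma red_eta : forall E n n', red n n' -> red (eta E n) (eta E n').
Proof.
  induction E as [x|E1 IHE1 E2 IHE2|E IHE]; intros n n' H; simpl; auto.
  - apply red_lam, IHE2, red_appl, red_vren, H.
  - apply red_tlam, IHE, red_tapp, red_tren, H.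
Qed.

Lemma vars_below_eta : forall E n k, vars_below k n -> vars_below k (eta E n).
Proof.
  induction E as [x|E1 IHE1 E2 IHE2|E IHE]; intros n k H; simpl; auto.
  - apply IHE2. simpl. split; [|lia]. apply vars_below_vren with k; auto. intros; lia.
  - apply IHE. simpl. apply vars_below_tren. auto.
Qed.

Lemma step_app_shift_inv : forall p q, spine p -> step (App (vren S p) (Var 0)) q ->
  exists p', q = App (vren S p') (Var 0) /\ step p p'.
Proof.
  intros p q Hp H. inversion H; subst.
  - destruct p; try discriminate. inversion Hp.
  - match goal with Ha : step (vren S p) _ |- _ =>
      destruct (step_vren_inv _ _ _ Ha) as [p' [-> Hp']] end. eauto.
  - match goal with Ha : step (Var 0) _ |- _ => inversion Ha end.
Qed.

Lemma step_tapp_shift_inv : forall p q, spine p -> step (TApp (tren S p) 0) q ->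
  exists p', q = TApp (tren S p') 0 /\ step p p'.
Proof.
  intros p q Hp H. inversion H; subst.
  - destruct p; try discriminate. inversion Hp.
  - match goal with Ha : step (tren S p) _ |- _ =>
      destruct (step_tren_inv _ _ _ Ha) as [p' [-> Hp']] end. eauto.
Qed.

Lemma red_app_shift_inv : forall p q, spine p -> red (App (vren S p) (Var 0)) q ->
  exists p', q = App (vren S p') (Var 0) /\ red p p'.
Proof.
  intros p q Hp H. remember (App (vren S p) (Var 0)) as a eqn:Ha. revert p Hp Ha.
  induction H as [|a b c Hab Hbc IH]; intros p Hp ->.
  - exists p; split; [reflexivity | constructor].
  - destruct (step_app_shift_inv _ _ Hp Hab) as [p1 [-> Hp1]].
    destruct (IH p1 (spine_step _ _ Hp1 Hp) eq_refl) as [p' [-> Hp']].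
    exists p'; split; [reflexivity | econstructor; eauto].
Qed.

Lemma red_tapp_shift_inv : forall p q, spine p -> red (TApp (tren S p) 0) q ->
  exists p', q = TApp (tren S p') 0 /\ red p p'.
Proof.
  intros p q Hp H. remember (TApp (tren S p) 0) as a eqn:Ha. revert p Hp Ha.
  induction H as [|a b c Hab Hbc IH]; intros p Hp ->.
  - exists p; split; [reflexivity | constructor].
  - destruct (step_tapp_shift_inv _ _ Hp Hab) as [p1 [-> Hp1]].
    destruct (IH p1 (spine_step _ _ Hp1 Hp) eq_refl) as [p' [-> Hp']].
    exists p'; split; [reflexivity | econstructor; eauto].
Qed.

(** * Tracing reductions back through a generic instantiation *)

Inductive kind := Gen | Eta | Ne.

Section Generic.

Variable B0 : form.

(* [inst Gen d r u w]: [w] is obtained from [u], whose free term variables are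
   among [Var 0 .. Var d], by replacing the generic variable [Var d] with
   eta-expansions of the constant [c^(fren r B0)], possibly already
   beta-reduced against the arguments [Var d] receives in [u]; [r] records the
   atom binders crossed so far.  [inst Ne] relates a spine with head [Var d] to
   the same spine with head [c^(fren r B0)], and [inst Eta] to eta-expansions
   of such spines. *)
Inductive inst : kind -> nat -> (nat -> nat) -> term -> term -> Prop :=
| inst_var d r n : n < d -> inst Gen d r (Var n) (Var n)
| inst_cst d r A : inst Gen d r (Cst A) (Cst A)
| inst_lam d r u w : inst Gen (S d) r u w -> inst Gen d r (Lam u) (Lam w)
| inst_app d r u1 w1 u2 w2 :
    inst Gen d r u1 w1 -> inst Gen d r u2 w2 -> inst Gen d r (App u1 u2) (App w1 w2)
| inst_tlam d r u w :
    inst Gen d (fun n => S (r n)) u w -> inst Gen d r (TLam u) (TLam w)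
| inst_tapp d r u w Y : inst Gen d r u w -> inst Gen d r (TApp u Y) (TApp w Y)
| inst_gen_eta d r p w : inst Eta d r p w -> inst Gen d r p w
| inst_eta_ne d r p n : inst Ne d r p n -> inst Eta d r p n
| inst_eta_lam d r p w :
    inst Eta (S d) r (App (vren S p) (Var 0)) w -> inst Eta d r p (Lam w)
| inst_eta_tlam d r p w :
    inst Eta d (fun n => S (r n)) (TApp (tren S p) 0) w -> inst Eta d r p (TLam w)
| inst_head d r : inst Ne d r (Var d) (Cst (fren r B0))
| inst_ne_app d r p n a b :
    inst Ne d r p n -> inst Gen d r a b -> inst Ne d r (App p a) (App n b)
| inst_ne_tapp d r p n Y : inst Ne d r p n -> inst Ne d r (TApp p Y) (TApp n Y).

Lemma inst_spine : forall k d r p w, inst k d r p w -> k <> Gen -> spine p.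
Proof.
  induction 1; intros Hk; try congruence.
  - apply IHinst; discriminate.
  - assert (Hs : spine (App (vren S p) (Var 0))) by (apply IHinst; discriminate).
    inversion Hs. eapply spine_vren_inv; eauto.
  - assert (Hs : spine (TApp (tren S p) 0)) by (apply IHinst; discriminate).
    inversion Hs. eapply spine_tren_inv; eauto.
  - constructor.
  - constructor. apply IHinst1; discriminate.
  - constructor. apply IHinst; discriminate.
Qed.

Lemma inst_lam_inv : forall k d r u w, inst k d r (Lam u) w -> exists w', w = Lam w'.
Proof.
  intros k d r u w H. inversion H; subst; eauto.
  all: match goal with Hi : inst ?k' _ _ (Lam ?v) _ |- _ =>
         assert (Hs : spine (Lam v)) by (apply (inst_spine k' _ _ _ _ Hi); discriminate) end.
  all: inversion Hs.
Qed.

Lemma inst_tlam_inv : forall k d r u w, inst k d r (TLam u) w -> exists w', w = TLam w'.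
Proof.
  intros k d r u w H. inversion H; subst; eauto.
  all: match goal with Hi : inst ?k' _ _ (TLam ?v) _ |- _ =>
         assert (Hs : spine (TLam v)) by (apply (inst_spine k' _ _ _ _ Hi); discriminate) end.
  all: inversion Hs.
Qed.

Lemma inst_tren : forall k d r u w, inst k d r u w ->
  forall f, inst k d (fun n => f (r n)) (tren f u) (tren f w).
Proof.
  induction 1; intros f; simpl; try (constructor; auto; fail).
  - constructor. exact (IHinst (upr f)).
  - apply inst_eta_lam. rewrite vren_tren. apply IHinst.
  - apply inst_eta_tlam. specialize (IHinst (upr f)). simpl in IHinst.
    rewrite tren_comp in IHinst |- *. exact IHinst.
  - rewrite fren_comp. constructor.
Qed.

Lemma inst_vren : forall k d r u w, inst k d r u w ->
  forall g, (forall n, n < d -> g n < g d) -> inst k (g d) r (vren g u) (vren g w).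
Proof.
  induction 1; intros g Hg; simpl; try (constructor; auto; fail).
  - apply inst_lam. apply (IHinst (upr g)). intros [|n] Hn; simpl; [lia|]. specialize (Hg n). lia.
  - apply inst_eta_lam. specialize (IHinst (upr g)). simpl in IHinst.
    rewrite vren_comp in IHinst |- *. apply IHinst.
    intros [|n] Hn; simpl; [lia|]. specialize (Hg n). lia.
  - apply inst_eta_tlam. rewrite <- vren_tren. auto.
Qed.

Lemma inst_upt : forall d1 d2 r su sw,
  (forall n, n < d1 -> inst Gen d2 r (su n) (sw n)) ->
  forall n, n < S d1 -> inst Gen (S d2) r (upt su n) (upt sw n).
Proof.
  intros d1 d2 r su sw H [|n] Hn; simpl.
  - constructor; lia.
  - apply (inst_vren _ d2). apply H; lia. intros; lia.
Qed.

Lemma inst_subst : forall k d1 r u w, inst k d1 r u w ->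
  forall su sw d2, (forall n, n < d1 -> inst Gen d2 r (su n) (sw n)) -> su d1 = Var d2 ->
  inst k d2 r (subst su u) (subst sw w).
Proof.
  induction 1; intros su sw d2 Hs Hd; simpl; try (constructor; eauto; fail).
  - auto.
  - constructor. apply IHinst; [apply inst_upt; auto | simpl; rewrite Hd; reflexivity].
  - constructor. apply IHinst; [intros; apply inst_tren; auto | rewrite Hd; reflexivity].
  - apply inst_eta_lam. rewrite vren_subst.
    specialize (IHinst (upt su) (upt sw) (S d2)). simpl in IHinst. rewrite subst_vren in IHinst.
    apply IHinst; [apply inst_upt; auto | simpl; rewrite Hd; reflexivity].
  - apply inst_eta_tlam. rewrite tren_subst. simpl in IHinst. apply IHinst.
    + intros; apply inst_tren; auto.
    + rewrite Hd. reflexivity.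
  - rewrite Hd. constructor.
Qed.

Lemma inst_eta : forall E d r p n, inst Ne d r p n -> inst Eta d r p (eta E n).
Proof.
  induction E as [x|E1 IHE1 E2 IHE2|E IHE]; intros d r p n H; simpl.
  - constructor; auto.
  - apply inst_eta_lam, IHE2. constructor.
    + apply (inst_vren _ d); auto. intros; lia.
    + constructor; lia.
  - apply inst_eta_tlam, IHE. constructor. apply inst_tren. exact H.
Qed.

Lemma inst_generic : forall E u d r s, vars_below (S d) u ->
  (forall n, n < d -> s n = Var n) -> s d = eta E (Cst (fren r B0)) ->
  inst Gen d r u (subst s u).
Proof.
  intros E u. induction u as [n|C|t IH|t1 IH1 t2 IH2|t IH|t IH Y];
    intros d r s Hv Hs Hd; simpl in *.
  - destruct (Nat.eq_dec n d) as [->|Hne].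
    + rewrite Hd. apply inst_gen_eta, inst_eta. constructor.
    + rewrite Hs by lia. constructor; lia.
  - constructor.
  - constructor. apply IH; auto.
    + intros [|n] Hn; simpl; auto. rewrite Hs by lia. reflexivity.
    + simpl. rewrite Hd, vren_eta. reflexivity.
  - destruct Hv. constructor; auto.
  - constructor. apply IH; auto.
    + intros n Hn. rewrite Hs by lia. reflexivity.
    + rewrite Hd, tren_eta. simpl. rewrite fren_comp. reflexivity.
  - constructor; auto.
Qed.

Lemma inst_lam_r_inv : forall d r u w, inst Gen d r u (Lam w) ->
  (exists u0, u = Lam u0 /\ inst Gen (S d) r u0 w) \/
  inst Eta (S d) r (App (vren S u) (Var 0)) w.
Proof.
  intros d r u w H. inversion H; subst; eauto.
  match goal with He : inst Eta _ _ _ _ |- _ => inversion He; subst; auto end.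
  match goal with Hn : inst Ne _ _ _ _ |- _ => inversion Hn end.
Qed.

Lemma inst_tlam_r_inv : forall d r u w, inst Gen d r u (TLam w) ->
  (exists u0, u = TLam u0 /\ inst Gen d (fun n => S (r n)) u0 w) \/
  inst Eta d (fun n => S (r n)) (TApp (tren S u) 0) w.
Proof.
  intros d r u w H. inversion H; subst; eauto.
  match goal with He : inst Eta _ _ _ _ |- _ => inversion He; subst; auto end.
  match goal with Hn : inst Ne _ _ _ _ |- _ => inversion Hn end.
Qed.

(* When [u1] is the instantiated variable, [App u1 u2] is already the
   counterpart of the contracted eta-expansion, so no step of [u] is needed. *)
Lemma inst_beta_back : forall d r u1 u2 w1 w2,
  inst Gen d r u1 (Lam w1) -> inst Gen d r u2 w2 ->
  exists u', red (App u1 u2) u' /\ inst Gen d r u' (subst1 w2 w1).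
Proof.
  intros d r u1 u2 w1 w2 H1 H2.
  assert (Hs : forall n, n < S d -> inst Gen d r (scons u2 Var n) (scons w2 Var n)).
  { intros [|n] Hn; simpl; [exact H2 | constructor; lia]. }
  destruct (inst_lam_r_inv _ _ _ _ H1) as [[u [-> Hu]] | He].
  - exists (subst1 u2 u). split; [apply red_one; constructor |].
    apply (inst_subst _ (S d)); auto.
  - exists (App u1 u2). split; [constructor |].
    apply inst_gen_eta. rewrite <- (subst_scons_vren_S u2 u1).
    apply (inst_subst _ (S d) _ _ _ He); auto.
Qed.

Lemma inst_tbeta_back : forall d r u w Y,
  inst Gen d r u (TLam w) ->
  exists u', red (TApp u Y) u' /\ inst Gen d r u' (tinst Y w).
Proof.
  intros d r u w Y H.
  destruct (inst_tlam_r_inv _ _ _ _ H) as [[u0 [-> Hu]] | He].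
  - exists (tinst Y u0). split; [apply red_one; constructor |].
    apply (inst_tren _ _ _ _ _ Hu (scons Y (fun n => n))).
  - exists (TApp u Y). split; [constructor |].
    apply inst_gen_eta.
    replace (TApp u Y) with (tinst Y (TApp (tren S u) 0))
      by (unfold tinst; simpl; rewrite tren_comp, tren_id; reflexivity).
    apply (inst_tren _ _ _ _ _ He (scons Y (fun n => n))).
Qed.

Ltac lift_step IH w :=
  match goal with Hs : step w _ |- _ => destruct (IH _ Hs) as [u' [Hu Hi]] end.

Lemma inst_step_back : forall k d r u w, inst k d r u w ->
  forall w', step w w' -> exists u', red u u' /\ inst k d r u' w'.
Proof.
  induction 1; intros w' Hw.
  - inversion Hw.
  - inversion Hw.
  - inversion Hw; subst. lift_step IHinst w.
    exists (Lam u'). split; [apply red_lam | constructor]; auto.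
  - inversion Hw; subst.
    + apply inst_beta_back; auto.
    + lift_step IHinst1 w1. exists (App u' u2). split; [apply red_appl | constructor]; auto.
    + lift_step IHinst2 w2. exists (App u1 u'). split; [apply red_appr | constructor]; auto.
  - inversion Hw; subst. lift_step IHinst w.
    exists (TLam u'). split; [apply red_tlam | constructor]; auto.
  - inversion Hw; subst.
    + apply inst_tbeta_back; auto.
    + lift_step IHinst w. exists (TApp u' Y). split; [apply red_tapp | constructor]; auto.
  - destruct (IHinst _ Hw) as [u' [Hu Hi]]. exists u'. split; [| constructor]; auto.
  - destruct (IHinst _ Hw) as [u' [Hu Hi]]. exists u'. split; [| constructor]; auto.
  - assert (Hp : spine p) by (eapply inst_spine; [apply inst_eta_lam; eauto | discriminate]).
    inversion Hw; subst. lift_step IHinst w.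
    destruct (red_app_shift_inv _ _ Hp Hu) as [p' [-> Hp']].
    exists p'. split; [| apply inst_eta_lam]; auto.
  - assert (Hp : spine p) by (eapply inst_spine; [apply inst_eta_tlam; eauto | discriminate]).
    inversion Hw; subst. lift_step IHinst w.
    destruct (red_tapp_shift_inv _ _ Hp Hu) as [p' [-> Hp']].
    exists p'. split; [| apply inst_eta_tlam]; auto.
  - inversion Hw.
  - inversion Hw; subst.
    + inversion H.
    + lift_step IHinst1 n. exists (App u' a). split; [apply red_appl | constructor]; auto.
    + lift_step IHinst2 b. exists (App p u'). split; [apply red_appr | constructor]; auto.
  - inversion Hw; subst.
    + inversion H.
    + lift_step IHinst n. exists (TApp u' Y). split; [apply red_tapp | constructor]; auto.
Qed.

Lemma inst_red_back : forall w w', red w w' ->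
  forall k d r u, inst k d r u w -> exists u', red u u' /\ inst k d r u' w'.
Proof.
  induction 1 as [w|w w1 w' Hw _ IH]; intros k d r u Hi.
  - exists u; split; [constructor | exact Hi].
  - destruct (inst_step_back _ _ _ _ _ Hi _ Hw) as [u1 [Hu1 Hi1]].
    destruct (IH _ _ _ _ Hi1) as [u' [Hu' Hi']].
    exists u'; split; [eapply red_trans |]; eauto.
Qed.

Lemma inst_normal : forall k d r u w, inst k d r u w -> normal w -> normal u.
Proof.
  induction 1; simpl; intros Hw; auto.
  - destruct Hw as [Hl [Hn1 Hn2]]. repeat split; auto.
    destruct u1; auto. destruct (inst_lam_inv _ _ _ _ _ H) as [w' ->]. contradiction.
  - destruct Hw as [Hl Hn]. split; auto.
    destruct u; auto. destruct (inst_tlam_inv _ _ _ _ _ H) as [w' ->]. contradiction.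
  - apply IHinst in Hw. destruct Hw as [_ [Hw _]]. apply normal_vren in Hw. exact Hw.
  - apply IHinst in Hw. destruct Hw as [_ Hw]. apply normal_tren in Hw. exact Hw.
  - destruct Hw as [_ [Hn Hb]]. repeat split; auto.
    destruct (inst_spine _ _ _ _ _ H ltac:(discriminate)); exact I.
  - destruct Hw as [_ Hn]. split; auto.
    destruct (inst_spine _ _ _ _ _ H ltac:(discriminate)); exact I.
Qed.

Lemma inst_typed : forall k d r u w, inst k d r u w ->
  forall D T, length D = d -> typed D w T -> typed (D ++ [fren r B0]) u T.
Proof.
  induction 1; intros D T HD Hw; subst.
  - inversion Hw; subst. constructor. rewrite nth_error_app1; auto.
  - inversion Hw; subst. constructor.
  - inversion Hw; subst. constructor. apply (IHinst (A :: D)); auto.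
  - inversion Hw; subst. econstructor; eauto.
  - inversion Hw; subst. constructor. rewrite map_app. simpl. rewrite fren_comp.
    apply IHinst; auto. apply length_map.
  - inversion Hw; subst. constructor. eauto.
  - eauto.
  - eauto.
  - inversion Hw; subst. apply typed_app_shift_inv. apply (IHinst (A :: D)); auto.
  - inversion Hw; subst. apply typed_tapp_shift_inv.
    + eapply inst_spine; [apply inst_eta_tlam; eauto | discriminate].
    + rewrite map_app. simpl. rewrite fren_comp. apply IHinst; auto. apply length_map.
  - inversion Hw; subst. constructor. rewrite nth_error_app2, Nat.sub_diag; reflexivity.
  - inversion Hw; subst. econstructor; eauto.
  - inversion Hw; subst. constructor. eauto.
Qed.

End Generic.

Lemma generic_instance_normal_form : forall B r u w T, vars_below 1 u ->
  red (subst1 (eta B (Cst (fren r B))) u) w -> normal w -> typed [] w T ->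
  exists u', red u u' /\ normal u' /\ typed [fren r B] u' T.
Proof.
  intros B r u w T Hu Hr Hn Ht.
  assert (Hi : inst B Gen 0 r u (subst1 (eta B (Cst (fren r B))) u)).
  { apply (inst_generic _ B); auto. intros; lia. }
  destruct (inst_red_back _ _ _ Hr _ _ _ _ Hi) as [u' [Hu' Hi']].
  exists u'. split; [exact Hu' | split].
  - eapply inst_normal; eauto.
  - apply (inst_typed _ _ _ _ _ _ Hi' []); auto.
Qed.

(** * Fresh atoms *)

Fixpoint fbound (A : form) : nat :=
  match A with
  | FVar n => S n
  | Imp A B => max (fbound A) (fbound B)
  | All A => pred (fbound A)
  end.

Fixpoint tbound (t : term) : nat :=
  match t with
  | Var _ => 0
  | Cst A => fbound A
  | Lam t => tbound t
  | App t s => max (tbound t) (tbound s)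
  | TLam t => pred (tbound t)
  | TApp t Y => max (tbound t) (S Y)
  end.

Lemma fren_ext_fbound : forall A f g,
  (forall n, n < fbound A -> f n = g n) -> fren f A = fren g A.
Proof.
  induction A as [x|A1 IH1 A2 IH2|A IH]; intros f g H; simpl in *; f_equal.
  - apply H; lia.
  - apply IH1; intros; apply H; lia.
  - apply IH2; intros; apply H; lia.
  - apply IH. intros [|n] Hn; simpl; auto. f_equal. apply H. lia.
Qed.

Lemma tren_ext_tbound : forall t f g,
  (forall n, n < tbound t -> f n = g n) -> tren f t = tren g t.
Proof.
  induction t as [n|C|t IH|t1 IH1 t2 IH2|t IH|t IH Y]; intros f g H; simpl in *; f_equal.
  - apply fren_ext_fbound; auto.
  - apply IH; auto.
  - apply IH1; intros; apply H; lia.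
  - apply IH2; intros; apply H; lia.
  - apply IH. intros [|n] Hn; simpl; auto. f_equal. apply H. lia.
  - apply IH; intros; apply H; lia.
  - apply H; lia.
Qed.

Definition close_atom (Y n : nat) : nat := if Nat.eqb n Y then 0 else S n.

Lemma tren_close_atom_tinst : forall Y u, tbound u <= Y ->
  tren (close_atom Y) (tinst Y u) = u.
Proof.
  intros Y u HY. unfold tinst. rewrite tren_comp. rewrite <- (tren_id u) at 2.
  apply tren_ext_tbound. intros [|m] Hm; simpl; unfold close_atom.
  - rewrite Nat.eqb_refl. reflexivity.
  - destruct (Nat.eqb_spec m Y); [lia | reflexivity].
Qed.

Lemma fren_close_atom_scons : forall Y r B, (forall m, m < fbound B -> r m <> Y) ->
  fren (close_atom Y) (fren (scons Y r) B) = fren (upr r) B.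
Proof.
  intros Y r B HY. rewrite fren_comp. apply fren_ext_fbound.
  intros [|m] Hm; simpl; unfold close_atom.
  - rewrite Nat.eqb_refl. reflexivity.
  - destruct (Nat.eqb_spec (r m) Y); [exfalso; apply (HY m); [lia | auto] | reflexivity].
Qed.

(** * Reflection and reification *)

Lemma qIv_expand : forall A r t t', red t t' -> qIv A r t' -> qIv A r t.
Proof.
  destruct A; simpl; intros r t t' H [s [Hs Hv]]; exists s; split; eauto using red_trans.
Qed.

Definition not_abs (t : term) : Prop :=
  match t with Lam _ | TLam _ => False | _ => True end.

Definition reflects (E : form) : Prop := forall r n, closed n -> normal n -> not_abs n ->
  typed [] n (fren r E) -> qIv E r (eta E n).

Definition reifies (E : form) : Prop := forall r t, closed t -> qIv E r t ->
  exists s, red t s /\ normal s /\ typed [] s (fren r E).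

Lemma reflects_imp : forall B C, reifies B -> reflects C -> reflects (Imp B C).
Proof.
  intros B C RfyB RflC r n Hc Hn Ha Ht. simpl. eexists; split; [constructor |].
  intros s Hsc Hs. unfold subst1. rewrite subst_eta. simpl. rewrite subst_scons_vren_S.
  destruct (RfyB r s Hsc Hs) as [s' [Hr [Hn' Ht']]].
  apply qIv_expand with (eta C (App n s')); [apply red_eta, red_appr, Hr |].
  apply RflC.
  - split; [exact Hc | eapply red_vars_below; eauto].
  - simpl. split; [destruct n; simpl in *; tauto | auto].
  - exact I.
  - econstructor; eauto.
Qed.

Lemma reifies_imp : forall B C, reflects B -> reifies C -> reifies (Imp B C).
Proof.
  intros B C RflB RfyC r t Hc [u [Hr Hu]].
  assert (Hu1 : vars_below 1 u) by exact (red_vars_below _ _ Hr 0 Hc).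
  set (M := eta B (Cst (fren r B))).
  assert (HMc : closed M) by (apply vars_below_eta; exact I).
  assert (HM : qIv B r M) by (apply RflB; simpl; auto; constructor).
  destruct (RfyC r (subst1 M u)) as [w [Hw [Hnw Htw]]]; auto.
  { apply (vars_below_subst _ 1); auto. intros [|n] Hn; [exact HMc | lia]. }
  destruct (generic_instance_normal_form B r u w _ Hu1 Hw Hnw Htw) as [u' [Hu' [Hn' Ht']]].
  exists (Lam u'). split; [| split].
  - eapply red_trans; [exact Hr | apply red_lam; exact Hu'].
  - exact Hn'.
  - constructor. exact Ht'.
Qed.

Lemma reflects_all : forall B, reflects B -> reflects (All B).
Proof.
  intros B RflB r n Hc Hn Ha Ht. simpl. eexists; split; [constructor |].
  intros Y. unfold tinst. rewrite tren_eta. simpl. rewrite tren_comp, tren_id.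
  apply RflB.
  - exact Hc.
  - simpl. split; [destruct n; simpl in *; tauto | exact Hn].
  - exact I.
  - replace (fren (scons Y r) B) with (finst Y (fren (upr r) B)).
    + constructor. exact Ht.
    + unfold finst. rewrite fren_comp. apply fren_ext. intros [|m]; reflexivity.
Qed.

Lemma reifies_all : forall B, reifies B -> reifies (All B).
Proof.
  intros B RfyB r t Hc [u [Hr Hu]].
  assert (Hcu : closed u) by exact (red_vars_below _ _ Hr 0 Hc).
  set (Y := S (tbound u + list_max (map r (seq 0 (fbound B))))).
  assert (HY : forall m, m < fbound B -> r m <> Y).
  { intros m Hm. assert (Hmax : Forall (fun k => k <= list_max (map r (seq 0 (fbound B))))
                                       (map r (seq 0 (fbound B)))) by (apply list_max_le; auto).
    rewrite Forall_forall in Hmax.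
    specialize (Hmax (r m) (in_map r _ _ (proj2 (in_seq _ _ _) (conj (Nat.le_0_l m) Hm)))).
    unfold Y. lia. }
  destruct (RfyB (scons Y r) (tinst Y u)) as [w [Hw [Hnw Htw]]]; auto.
  { apply vars_below_tren. exact Hcu. }
  exists (TLam (tren (close_atom Y) w)). split; [| split].
  - eapply red_trans; [exact Hr | apply red_tlam].
    rewrite <- (tren_close_atom_tinst Y u) at 1 by (unfold Y; lia).
    apply red_tren. exact Hw.
  - apply normal_tren. exact Hnw.
  - simpl. apply ty_tlam. rewrite <- (fren_close_atom_scons Y r B HY).
    exact (typed_tren _ _ _ Htw (close_atom Y)).
Qed.

Lemma reflects_reifies : forall E, reflects E /\ reifies E.
Proof.
  induction E as [x|B [RflB RfyB] C [RflC RfyC]|B [RflB RfyB]].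
  - split.
    + intros r n _ Hn _ Ht. exists n. split; [constructor | auto].
    + intros r t _ H. exact H.
  - split; [apply reflects_imp | apply reifies_imp]; auto.
  - split; [apply reflects_all | apply reifies_all]; auto.
Qed.

Lemma qIvalid_ctx_lam : forall A0 G t A, vars_below (S (length G)) t ->
  qIvalid_ctx (A0 :: G) t A -> qIvalid_ctx G (Lam t) (Imp A0 A).
Proof.
  intros A0 G t A Hv H ts Hts. simpl. eexists; split; [constructor |].
  intros s Hsc Hs. unfold subst1. rewrite subst_subst.
  assert (Hl : length ts = length G) by (eapply Forall2_length; eauto).
  specialize (H (s :: ts) (Forall2_cons _ _ (conj Hsc Hs) Hts)).
  erewrite subst_ext_vars_below; [exact H | exact Hv |].
  intros [|n] Hn; simpl; auto.
  rewrite subst_scons_vren_S. apply nth_indep. simpl in Hn. lia.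
Qed.

Lemma qIvalid_ctx_normalizes : forall G t A, vars_below (length G) t ->
  qIvalid_ctx G t A -> exists s, normal s /\ red t s /\ typed G s A.
Proof.
  induction G as [|A0 G IH]; intros t A Hv H.
  - specialize (H [] (Forall2_nil _)). unfold qIvalid in H.
    rewrite (subst_ext t _ Var), subst_var in H by (intros [|n]; reflexivity).
    destruct (proj2 (reflects_reifies A) (fun n => n) t Hv H) as [s [Hr [Hn Ht]]].
    rewrite fren_id in Ht. eauto.
  - destruct (IH (Lam t) (Imp A0 A) Hv (qIvalid_ctx_lam _ _ _ _ Hv H)) as [s [Hn [Hr Ht]]].
    destruct (red_lam_inv _ _ Hr) as [s' [-> Hr']].
    inversion Ht; subst. exists s'. auto.
Qed.

Theorem mainTheorem2 (base : nat -> Prop) (G : list form) (t : term) (A : form) :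
  vars_below (length G) t ->
  Ivalid base G t A ->
  exists s, normal s /\ proof_term base s /\ red t s /\ typed G s A.
Proof.
  intros Hv [Hpt Hq].
  destruct (qIvalid_ctx_normalizes G t A Hv Hq) as [s [Hn [Hr Ht]]].
  exists s. repeat split; auto.
  exact (red_proof_term_at base t s Hr 0 Hpt).
Qed.
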